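(* Let $X$ be a compact metric space and $f\colon X\to X$ an $n$-expansive homeomorphism with the shadowing property. Then $CR(f)=\overline{Per(f)}$.
   Context: $f$ is $n$-expansive if there is $c>0$ such that for every $x\in X$ the set $\{y: d(f^k(y),f^k(x))\leq c \ \forall k\in\mathbb{Z}\}$ has at most $n$ points. $f$ has the shadowing property if for every $\varepsilon>0$ there is $\delta>0$ such that for every $(x_k)_{k\in\mathbb{Z}}$ with $d(f(x_k),x_{k+1})<\delta$ for all $k$ there is $y$ with $d(f^k(y),x_k)<\varepsilon$ for all $k$. $Per(f)$ is the set of periodic points. A finite $\varepsilon$-pseudo orbit is $(x_k)_{k=0}^l$ with $d(f(x_k),x_{k+1})<\varepsilon$; $x$ is chain recurrent if for each $\varepsilon>0$ there is a nontrivial finite $\varepsilon$-pseudo orbit starting and ending at $x$; $CR(f)$ is the set of chain recurrent points. *)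

From HB Require Import structures.
From mathcomp Require Import all_boot all_order all_algebra.
From mathcomp Require Import all_classical all_reals all_analysis.
Set Implicit Arguments. Unset Strict Implicit. Unset Printing Implicit Defensive.
Import Order.TTheory GRing.Theory Num.Theory.
Local Open Scope classical_set_scope.
Local Open Scope ring_scope.

Section Dyn.
Context {R : realType} {X : metricType R}.

(* integer iterate f^k of a homeomorphism f with inverse g:
   f^n for k = n >= 0, g^(n+1) = f^(-(n+1)) for k = Negz n *)
Definition zit (f g : X -> X) (k : int) : X -> X :=
  match k with
  | Posz n => iter n f
  | Negz n => iter n.+1 g
  end.

Definition is_homeomorphism (f g : X -> X) : Prop :=
  cancel f g /\ cancel g f /\ continuous f /\ continuous g.

Definition n_expansive (n : nat) (f g : X -> X) : Prop :=
  exists2 c : R, 0 < c &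
    forall x : X, forall s : seq X, uniq s ->
      (forall y, y \in s -> forall k : int,
          mdist (zit f g k y) (zit f g k x) <= c) ->
      (size s <= n)%N.

Definition shadowing (f g : X -> X) : Prop :=
  forall eps : R, 0 < eps -> exists2 delta : R, 0 < delta &
    forall xs : int -> X,
      (forall k : int, mdist (f (xs k)) (xs (k + 1)) < delta) ->
      exists y : X, forall k : int, mdist (zit f g k y) (xs k) < eps.

Definition Per (f : X -> X) : set X :=
  [set x | exists2 m : nat, (0 < m)%N & iter m f x = x].

Definition CR (f : X -> X) : set X :=
  [set x | forall eps : R, 0 < eps ->
     exists l : nat, exists xs : nat -> X,
       [/\ (0 < l)%N, xs 0%N = x, xs l = x &
           forall i : nat, (i < l)%N -> mdist (f (xs i)) (xs i.+1) < eps]].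

End Dyn.

(** If [x] is chain recurrent, the loops through [x] repeated periodically
    are bi-infinite pseudo-orbits, so they are shadowed by some [y].  When the
    loop has length [l], the points [f^(jl) y], [j = 0..n], shadow the same
    periodic pseudo-orbit, hence stay [c]-close to [y] along the whole orbit;
    [n]-expansiveness forces two of them to coincide, which makes [f^(il) y]
    a periodic point close to [x].  Conversely, a periodic point close to
    [x], followed around its orbit and with both endpoints replaced by [x],
    is a pseudo-orbit loop through [x]. *)
From HB Require Import structures.
From mathcomp Require Import all_boot all_order all_algebra.
From mathcomp Require Import all_classical all_reals all_analysis.
From mathcomp Require Import zify.
Set Implicit Arguments. Unset Strict Implicit. Unset Printing Implicit Defensive.
Import Order.TTheory GRing.Theory Num.Theory.
Local Open Scope classical_set_scope.
Local Open Scope ring_scope.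

Section Iterates.
Context {R : realType} {X : metricType R}.
Variables (f g : X -> X).
Hypothesis fK : cancel f g.

Lemma zitS (k : int) (y : X) : zit f g k (f y) = zit f g (k + 1) y.
Proof.
case: k => [m|[|m]].
- by rewrite -[1]/(Posz 1) -PoszD addn1 /zit iterSr.
- by rewrite /= fK.
- have -> : Negz m.+1 + 1 = Negz m by rewrite !NegzE; lia.
  by rewrite /zit iterSr fK.
Qed.

Lemma zit_iter (m : nat) (k : int) (y : X) :
  zit f g k (iter m f y) = zit f g (k + m%:Z) y.
Proof.
elim: m k y => [|m IHm] k y; first by rewrite addr0.
by rewrite iterSr IHm zitS -addrA -[1]/(Posz 1) -PoszD addn1.
Qed.

Lemma shadow_iter_periodic (ps : int -> X) (y : X) (r : R) (m : nat) :
  (forall k, ps (k + m%:Z) = ps k) ->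
  (forall k, mdist (zit f g k y) (ps k) < r) ->
  forall k, mdist (zit f g k (iter m f y)) (zit f g k y) < r + r.
Proof.
move=> psP hy k; rewrite zit_iter.
have := hy (k + m%:Z); rewrite psP => hy_km.
apply: (le_lt_trans (metric_triangle _ (ps k) _)).
by rewrite ltrD // metric_sym.
Qed.

End Iterates.

Section ChainRecurrence.
Context {R : realType} {X : metricType R}.
Variable f : X -> X.

Lemma iter_eq_Per (y : X) (i j : nat) :
  (i < j)%N -> iter i f y = iter j f y -> Per f (iter i f y).
Proof.
move=> ij eq_ij; exists (j - i)%N; first by rewrite subn_gt0.
by rewrite -iterD subnK ?(ltnW ij).
Qed.

Definition loop_extension (xs : nat -> X) (l : nat) (k : int) : X :=
  xs `|(k %% l%:Z)%Z|%N.

Lemma loop_extensionMD (xs : nat -> X) (l : nat) (k : int) (j : nat) :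
  loop_extension xs l (k + (j * l)%N%:Z) = loop_extension xs l k.
Proof. by rewrite /loop_extension PoszM addrC modzMDl. Qed.

Lemma loop_extension_pseudo_orbit (xs : nat -> X) (l : nat) (delta : R) :
  (0 < l)%N -> xs l = xs 0%N ->
  (forall i, (i < l)%N -> mdist (f (xs i)) (xs i.+1) < delta) ->
  forall k, mdist (f (loop_extension xs l k)) (loop_extension xs l (k + 1))
            < delta.
Proof.
move=> l0 xsl xsD k; rewrite /loop_extension -modzDml.
have [i -> il] : exists2 i : nat, (k %% l%:Z)%Z = i%:Z & (i < l)%N.
  by exists `|(k %% l%:Z)%Z|%N; lia.
rewrite -[1]/(Posz 1) -PoszD addn1.
have [il1 | il1] := ltnP i.+1 l.
  by rewrite modz_small; [exact: xsD | lia].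
have l_eq : l = i.+1 by apply/eqP; rewrite eqn_leq il il1.
by subst l; rewrite modzz /= -xsl; exact: xsD.
Qed.

Lemma CR_periodic_pseudo_orbit (x : X) (delta : R) : CR f x -> 0 < delta ->
  exists l : nat, exists ps : int -> X,
    [/\ (0 < l)%N, ps 0 = x, forall k j, ps (k + (j * l)%N%:Z) = ps k &
         forall k, mdist (f (ps k)) (ps (k + 1)) < delta].
Proof.
move=> xCR delta0; have [l [xs [l0 xs0 xsl xsD]]] := xCR _ delta0.
exists l, (loop_extension xs l); split=> //.
- by rewrite /loop_extension mod0z.
- exact: loop_extensionMD.
- by apply: loop_extension_pseudo_orbit; rewrite ?xsl ?xs0.
Qed.

Lemma closure_Per_sub_CR : continuous f -> closure (Per f) `<=` CR f.
Proof.
move=> cf x xcl eps eps0; have eps20 : 0 < eps / 2 by rewrite divr_gt0.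
have /nbhs_ballP [d /= d0 fball] := cf x _ (nbhsx_ballx _ _ eps20).
have md0 : 0 < Num.min d (eps / 2) by rewrite lt_min d0.
have [p [[m m0 pm] /=]] := xcl _ (nbhsx_ballx x _ md0).
rewrite ballEmdist /= lt_min => /andP [xpd xpe].
pose xs i := if (i == 0%N) || (i == m) then x else iter i f p.
exists m, xs; split=> //; first by rewrite /xs eqxx orbT.
move=> i im.
have fxs_near : mdist (f (xs i)) (f (iter i f p)) < eps / 2.
  rewrite /xs (ltn_eqF im) orbF; case: eqP => [-> | _]; last by rewrite mdistxx.
  by have := fball p; rewrite !ballEmdist; apply.
have xs_near : mdist (iter i.+1 f p) (xs i.+1) < eps / 2.
  rewrite /xs -[(_ == 0%N) || _]/(i.+1 == m).
  by case: eqP => [-> | _]; rewrite ?pm ?mdistxx // metric_sym.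
apply: le_lt_trans (metric_triangle _ (f (iter i f p)) _) _.
by rewrite [eps]splitr ltrD // -iterS.
Qed.

End ChainRecurrence.

Section Expansive.
Context {R : realType} {X : metricType R}.
Variables (f g : X -> X) (n : nat) (c : R).
Hypothesis fK : cancel f g.
Hypothesis expansive_c : forall (x : X) (s : seq X), uniq s ->
  (forall y, y \in s -> forall k : int,
     mdist (zit f g k y) (zit f g k x) <= c) ->
  (size s <= n)%N.

Lemma expansive_collision (x : X) (h : nat -> X) :
  (forall j, (j <= n)%N -> forall k : int,
     mdist (zit f g k (h j)) (zit f g k x) <= c) ->
  exists i j, [/\ (i < j)%N, (j <= n)%N & h i = h j].
Proof.
move=> h_close; pose s := [seq h j | j <- iota 0 n.+1].
have s_close y : y \in s -> forall k : int,
    mdist (zit f g k y) (zit f g k x) <= c.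
  by move=> /mapP [j]; rewrite mem_iota add0n => jn ->; exact: h_close.
have /(uniqPn x) [i [j [ij js]]] : ~~ uniq s.
  apply/negP => us; have := expansive_c us s_close.
  by rewrite size_map size_iota ltnn.
rewrite size_map size_iota in js.
rewrite !(nth_map 0%N) ?size_iota ?(ltn_trans ij js) //.
by rewrite !nth_iota ?(ltn_trans ij js) // => hij; exists i, j.
Qed.

Hypothesis shadowing_fg : shadowing f g.

Lemma CR_sub_closure_Per : 0 < c -> CR f `<=` closure (Per f).
Proof.
move=> c0 x xCR B /nbhs_ballP [e /= e0 xeB].
pose eps := Num.min e (c / 2).
have eps0 : 0 < eps by rewrite lt_min e0 divr_gt0.
have [delta delta0 shadow] := shadowing_fg eps0.
have [l [ps [l0 ps0 psP psD]]] := CR_periodic_pseudo_orbit xCR delta0.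
have [y y_shadow] := shadow ps psD.
have iter_close j (k : int) :
    mdist (zit f g k (iter (j * l) f y)) (zit f g k y) <= c.
  apply/ltW/(lt_le_trans (shadow_iter_periodic fK _ y_shadow k)).
    by move=> k'; exact: psP.
  by rewrite [c]splitr lerD // ge_min lexx orbT.
have [i [j [ij _ eq_ij]]] := expansive_collision (fun j _ => iter_close j).
exists (iter (i * l) f y); split.
  by apply: iter_eq_Per eq_ij; rewrite ltn_pmul2r.
apply: xeB; rewrite ballEmdist /= metric_sym -ps0 -(psP 0 i) add0r.
rewrite -[iter _ f y]/(zit f g (i * l)%N y).
by apply: lt_le_trans (y_shadow _) _; rewrite ge_min lexx.
Qed.

End Expansive.

Theorem proposition2p3 (R : realType) (X : metricType R) (n : nat)
    (f g : X -> X) :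
  compact [set: X] ->
  is_homeomorphism f g ->
  n_expansive n f g ->
  shadowing f g ->
  CR f = closure (Per f).
Proof.
move=> _ [fK [_ [cf _]]] [c c0 expansive_c] shadowing_fg.
apply/seteqP; split; last exact: closure_Per_sub_CR.
exact: CR_sub_closure_Per fK expansive_c shadowing_fg c0.
Qed.
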